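(* Let $X$ be an uncountable Polish space. Then \[ \mathscr{L}_X(\mathsf{r})=\mathscr{L}_X(\mathcal{R})=\Sigma^1_1(X), \] where $\Sigma^1_1(X)$ is the family of all analytic subsets of $X$. Moreover, for every nonempty analytic set $C\subseteq X$ there exists a sequence $y=(y_{\{n,m\}})_{\{n,m\}\in[\omega]^2}\in X^{[\omega]^2}$ such that $C=\Lambda_y(\mathsf{r})=\Lambda_y(\mathcal{R})$.
   Context: $\omega$ denotes the set of nonnegative integers; $[D]^2$ is the family of 2-element subsets of $D$, $[D]^\omega$ the family of infinite subsets, $\mathrm{FIN}$ the finite subsets. The Ramsey map is $\mathsf{r}:[\omega]^\omega\to[[\omega]^2]^\omega$, $\mathsf{r}(D)=[D]^2$. The Ramsey ideal $\mathcal{R}$ on $[\omega]^2$ is the family of all $S\subseteq[\omega]^2$ such that $[D]^2\not\subseteq S$ for every infinite $D\subseteq\omega$. For a sequence $y:[\omega]^2\to X$ in a topological space $X$: $\eta\in X$ is an $\mathsf{r}$-limit point of $y$ if there is an infinite $D\subseteq\omega$ such that for every neighborhood $U$ of $\eta$ there is a finite $K\subseteq\omega$ with $y_{\{n,m\}}\in U$ for all $\{n,m\}\in[D\setminus K]^2$; $\Lambda_y(\mathsf{r})$ is the set of such points. $\eta$ is an $\mathcal{R}$-limit point of $y$ if there is $E\subseteq[\omega]^2$ with $E\notin\mathcal{R}$ such that the subsequence $(y_s)_{s\in E}$ converges to $\eta$ in the ordinary sense (for every neighborhood $U$ of $\eta$, $y_s\in U$ for all but finitely many $s\in E$); $\Lambda_y(\mathcal{R})$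 is the set of such points. $\mathscr{L}_X(\mathsf{r})=\{A\subseteq X:\exists y\in X^{[\omega]^2}\ A=\Lambda_y(\mathsf{r})\}\cup\{\emptyset\}$ and $\mathscr{L}_X(\mathcal{R})=\{A\subseteq X:\exists y\in X^{[\omega]^2}\ A=\Lambda_y(\mathcal{R})\}\cup\{\emptyset\}$. *)

From HB Require Import structures.
From mathcomp Require Import all_boot all_order all_algebra.
From mathcomp Require Import all_classical all_reals all_analysis.
From Stdlib Require Import Rdefinitions Raxioms.

Set Implicit Arguments.
Unset Strict Implicit.
Unset Printing Implicit Defensive.

Local Open Scope classical_set_scope.

Definition metric_compatible (T : topologicalType) (d : T -> T -> R) : Prop :=
  [/\ (forall x y, Rle 0%R (d x y)),
      (forall x y, d x y = 0%R <-> x = y),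
      (forall x y, d x y = d y x),
      (forall x y z, Rle (d x z) (Rplus (d x y) (d y z))) &
      (forall U : set T, open U <->
         (forall x, U x -> exists e : R, Rlt 0%R e /\
                             [set y | Rlt (d x y) e] `<=` U))].

Definition metric_complete (T : topologicalType) (d : T -> T -> R) : Prop :=
  forall u : nat -> T,
    (forall e : R, Rlt 0%R e ->
       exists N, forall n m, (N <= n)%N -> (N <= m)%N -> Rlt (d (u n) (u m)) e) ->
    exists x : T, u @ \oo --> x.

Definition separable_space (T : topologicalType) : Prop :=
  exists D : set T, countable D /\ closure D = setT.

Definition polish (T : topologicalType) : Prop :=
  separable_space T /\
  exists d : T -> T -> R, metric_compatible d /\ metric_complete d.

(* A subset of X is analytic (Sigma^1_1) if it is the continuous image of a
   Polish space (Kechris, Def. 14.1); the empty set is the image of the empty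
   Polish space. *)
Definition analytic (X : topologicalType) (A : set X) : Prop :=
  exists Y : topologicalType, polish Y /\
    exists f : Y -> X, continuous f /\ f @` setT = A.

(* {n, m} with n < m, represented as the pair (n, m) *)
Definition pair2 := {p : nat * nat | (p.1 < p.2)%N}.

Definition pmin (s : pair2) : nat := (sval s).1.
Definition pmax (s : pair2) : nat := (sval s).2.

Definition sq2 (D : set nat) : set pair2 :=
  [set s | D (pmin s) /\ D (pmax s)].

Definition infinite_set (D : set nat) : Prop := ~ finite_set D.

Definition ramsey_ideal : set (set pair2) :=
  [set S | forall D : set nat, infinite_set D -> ~ (sq2 D `<=` S)].

Definition r_limit (X : topologicalType) (y : pair2 -> X) (eta : X) : Prop :=
  exists D : set nat, infinite_set D /\
    forall U : set X, nbhs eta U ->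
      exists K : set nat, finite_set K /\
        forall s : pair2, sq2 (D `\` K) s -> U (y s).

Definition Lambda_r (X : topologicalType) (y : pair2 -> X) : set X :=
  [set eta | r_limit y eta].

Definition R_limit (X : topologicalType) (y : pair2 -> X) (eta : X) : Prop :=
  exists E : set pair2, ~ ramsey_ideal E /\
    forall U : set X, nbhs eta U -> finite_set [set s | E s /\ ~ U (y s)].

Definition Lambda_R (X : topologicalType) (y : pair2 -> X) : set X :=
  [set eta | R_limit y eta].

Definition L_r (X : topologicalType) : set (set X) :=
  [set A | (exists y : pair2 -> X, A = Lambda_r y) \/ A = set0].

Definition L_R (X : topologicalType) : set (set X) :=
  [set A | (exists y : pair2 -> X, A = Lambda_R y) \/ A = set0].

Definition Sigma11 (X : topologicalType) : set (set X) :=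
  [set A | analytic A].

From Stdlib Require Import Reals Lra.
From HB Require Import structures.
From mathcomp Require Import all_boot all_order all_algebra.
From mathcomp Require Import all_classical all_reals all_analysis.
From mathcomp Require Import zify.

(** Everything goes through the representation of an analytic set as a
   continuous image [f[Y]] of a Polish space [Y].

   Fix a dense sequence [e] in [Y] and read
   every natural number as the code of a finite sequence [t].  For codes
   [n < m] such that [t_n] is a prefix of [t_m] and [t_m] is a fast Cauchy
   chain ([rho (e t_i) (e t_j) <= 1/(i+1)] for [i < j]), let
   [y {n, m} = f (e (last t_m))], and [y = f z0] elsewhere.  The codes of the
   initial segments of approximations of a point [z] make [f z] an
   R-limit, hence an r-limit.  Conversely, along an infinite set on which [y]
   stays away from [f z0] the codes are pairwise comparable, so they spell out
   one fast chain, and [f] maps its limit to the r-limit.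

   A point [eta] is an r-limit (R-limit) of [y]
   exactly when some increasing enumeration [d] of an infinite set and some
   thresholds [N] make [y {d_i, d_j}] oscillate by less than [1/(k+1)] as soon
   as the smaller (larger) index passes [N k].  These witnesses [(d, N)] form a
   closed subset of the Baire space of sequences in [nat * nat], which is
   Polish, and the limit map is continuous from it onto the limit set. *)

Set Implicit Arguments.
Unset Strict Implicit.
Unset Printing Implicit Defensive.
Local Open Scope classical_set_scope.
Local Open Scope R_scope.

(** * Metric spaces *)

Section MetricFacts.
Variables (T : topologicalType) (d : T -> T -> R).
Hypothesis hd : metric_compatible d.

Lemma metric_ge0 x y : 0 <= d x y. Proof. by case: hd. Qed.
Lemma metric_eq0 x y : d x y = 0 <-> x = y. Proof. by case: hd. Qed.
Lemma metricC x y : d x y = d y x. Proof. by case: hd. Qed.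
Lemma metric_triangle_le x y z : d x z <= d x y + d y z. Proof. by case: hd. Qed.
Lemma metric_openP (U : set T) :
  open U <-> forall x, U x -> exists e, 0 < e /\ [set y | d x y < e] `<=` U.
Proof. by case: hd. Qed.
Lemma metricxx x : d x x = 0. Proof. exact/metric_eq0. Qed.

Lemma metric_gt0 x y : x <> y -> 0 < d x y.
Proof.
move=> xy; case: (Rle_lt_or_eq_dec _ _ (metric_ge0 x y)) => // /esym.
by move=> /metric_eq0.
Qed.

Lemma open_metric_ball x e : open [set z | d x z < e].
Proof.
apply/metric_openP => z /= hz; exists (e - d x z); split; first lra.
move=> w /= hw; have := metric_triangle_le x z w; lra.
Qed.

Lemma nbhs_metric_ball x e : 0 < e -> nbhs x [set z | d x z < e].
Proof.
move=> e0; rewrite nbhsE; exists [set z | d x z < e] => //.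
by split; [exact: open_metric_ball | rewrite /= metricxx].
Qed.

Lemma nbhs_metric_ballP x U :
  nbhs x U -> exists2 e, 0 < e & [set z | d x z < e] `<=` U.
Proof.
rewrite nbhsE => -[B [oB Bx] BU].
have [e [e0 eB]] := (metric_openP B).1 oB x Bx.
by exists e => // z /eB /BU.
Qed.

Lemma cvg_metric_le (u : nat -> T) x w c : u @ \oo --> x ->
  (exists N, forall n, (N <= n)%N -> d (u n) w <= c) -> d x w <= c.
Proof.
move=> ux [N uw]; apply: Rnot_lt_le => cx.
have [N' _ uN'] := ux _ (nbhs_metric_ball x (e := d x w - c) ltac:(lra)).
have := uw (maxn N N') (leq_maxl _ _); have := uN' (maxn N N') (leq_maxr _ _).
have := metric_triangle_le x (u (maxn N N')) w; rewrite /=; lra.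
Qed.

Lemma metric_eq_small a b : (forall e, 0 < e -> d a b < e) -> a = b.
Proof.
move=> small; apply: contrapT => /metric_gt0 ab.
by have := small _ ab; lra.
Qed.

End MetricFacts.

Lemma continuous_metric (T1 T2 : topologicalType) (d1 : T1 -> T1 -> R)
    (d2 : T2 -> T2 -> R) (f : T1 -> T2) :
  metric_compatible d1 -> metric_compatible d2 -> continuous f ->
  forall x e, 0 < e ->
  exists2 de, 0 < de & forall z, d1 x z < de -> d2 (f x) (f z) < e.
Proof.
move=> h1 h2 fc x e e0.
have [de de0 hde] := nbhs_metric_ballP h1 (fc x _ (nbhs_metric_ball h2 (f x) e0)).
by exists de => // z /hde.
Qed.

Section MetricTopology.
Variables (T : Type) (rho : T -> T -> R).

(* The dummy [let] makes the carrier depend on [rho], so that each [rho]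
   carries its own topology instance. *)
Definition metric_topology : Type := let _ := rho in T.

HB.instance Definition _ := gen_eqMixin metric_topology.
HB.instance Definition _ := gen_choiceMixin metric_topology.

Definition metric_open (U : set metric_topology) :=
  forall x, U x -> exists e, 0 < e /\ [set y | rho x y < e] `<=` U.

Lemma metric_openT : metric_open setT.
Proof. by move=> x _; exists 1; split => //; lra. Qed.

Lemma metric_openI : setI_closed metric_open.
Proof.
move=> A B oA oB x [/oA [e1 [e10 h1]] /oB [e2 [e20 h2]]].
exists (Rmin e1 e2); split; first exact: Rmin_pos.
move=> z /= hz; split; [apply: h1 | apply: h2] => /=.
  by have := Rmin_l e1 e2; lra.
by have := Rmin_r e1 e2; lra.
Qed.

Lemma metric_open_bigcup (I : Type) (f : I -> set metric_topology) :
  (forall i, metric_open (f i)) -> metric_open (\bigcup_i f i).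
Proof.
by move=> oF x [i _ /oF [e [e0 he]]]; exists e; split => // z /he; exists i.
Qed.

HB.instance Definition _ :=
  isOpenTopological.Build metric_topology metric_openT metric_openI
    metric_open_bigcup.

Lemma metric_topologyE (U : set metric_topology) : open U <-> metric_open U.
Proof. by []. Qed.

Lemma metric_topology_compatible :
  (forall x y, 0 <= rho x y) -> (forall x y, rho x y = 0 <-> x = y) ->
  (forall x y, rho x y = rho y x) ->
  (forall x y z, rho x z <= rho x y + rho y z) ->
  metric_compatible (rho : metric_topology -> metric_topology -> R).
Proof. by []. Qed.

End MetricTopology.

Definition eps (n : nat) : R := / (INR n + 1).

Lemma eps_gt0 n : 0 < eps n.
Proof. by apply: Rinv_0_lt_compat; have := pos_INR n; lra. Qed.

Lemma eps_half_gt0 n : 0 < eps n / 2.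
Proof. by have := eps_gt0 n; lra. Qed.

Lemma eps_le m n : (m <= n)%N -> eps n <= eps m.
Proof.
move=> /leP mn; apply: Rinv_le_contravar; first by have := pos_INR m; lra.
by have := le_INR _ _ mn; lra.
Qed.

Lemma exists_eps_lt e : 0 < e -> exists n, eps n < e.
Proof.
move=> e0; have [N [hN N0]] := archimed_cor1 _ e0.
exists N; apply: Rle_lt_trans hN; apply: Rinv_le_contravar.
  exact: lt_0_INR.
lra.
Qed.

Lemma fast_cauchy_limit (T : topologicalType) (d : T -> T -> R) :
  metric_compatible d -> metric_complete d -> forall u : nat -> T,
  (forall i j, (i < j)%N -> d (u i) (u j) <= eps i) ->
  exists x, forall k, d (u k) x <= eps k.
Proof.
move=> hd cd u fast.
have [|x ux] := cd u.
  move=> r r0; have [N hN] := exists_eps_lt r0; exists N => n m Nn Nm.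
  case: (ltngtP n m) => [nm|mn|->]; last by rewrite metricxx //; lra.
    by have := fast _ _ nm; have := eps_le Nn; lra.
  by rewrite metricC //; have := fast _ _ mn; have := eps_le Nm; lra.
exists x => k; rewrite metricC //; apply: cvg_metric_le ux _ => //.
by exists k.+1 => n kn; rewrite metricC //; exact: fast.
Qed.

Lemma finite_set_bounded (K : set nat) :
  finite_set K -> exists B, forall n, K n -> (n < B)%N.
Proof.
move=> /finite_seqP [s ->]; exists (\max_(i <- s) i).+1 => n /= sn.
by rewrite ltnS; exact: (@leq_bigmax_seq _ _ predT id n sn).
Qed.

Lemma infinite_set_unbounded (D : set nat) :
  infinite_set D -> forall M, exists n, D n /\ (M <= n)%N.
Proof.
move=> iD M; apply: contrapT => noD; apply: iD.
apply: (sub_finite_set _ (finite_II M)) => n Dn /=.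
by rewrite ltnNge; apply/negP => Mn; apply: noD; exists n.
Qed.

Lemma unbounded_infinite_set (D : set nat) :
  (forall M, exists n, D n /\ (M <= n)%N) -> infinite_set D.
Proof.
move=> unb fD; have [B hB] := finite_set_bounded fD; have [n [Dn Bn]] := unb B.
by have := hB n Dn; rewrite ltnNge Bn.
Qed.

Lemma increasing_ge_id (f : nat -> nat) :
  (forall i, (f i < f i.+1)%N) -> forall i, (i <= f i)%N.
Proof. by move=> finc; elim=> // i IH; exact: leq_ltn_trans IH (finc i). Qed.

(** * Pairs and codes of finite sequences *)

Lemma pair2_of_proof a b : (minn a b < maxn a b + (a == b))%N.
Proof. by case: eqP => [->|]; rewrite ?minnn ?maxnn; lia. Qed.

(* For [a = b] this is the junk pair [{a, a + 1}]. *)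
Definition pair2_of (a b : nat) : pair2 :=
  exist _ (minn a b, maxn a b + (a == b))%N (pair2_of_proof a b).

Lemma pmin_lt_pmax (s : pair2) : (pmin s < pmax s)%N. Proof. exact: (svalP s). Qed.

Lemma pmin_pair2_of a b : pmin (pair2_of a b) = minn a b. Proof. by []. Qed.

Lemma pmax_pair2_of a b : a <> b -> pmax (pair2_of a b) = maxn a b.
Proof. by move=> /eqP/negbTE ab; rewrite /pmax /= ab addn0. Qed.

Lemma pair2_eq (s t : pair2) : sval s = sval t -> s = t.
Proof. by apply: eq_sig_hprop => x p q; exact: Prop_irrelevance. Qed.

Lemma pair2_ofC a b : pair2_of a b = pair2_of b a.
Proof. by apply: pair2_eq; rewrite /= minnC maxnC eq_sym. Qed.

Lemma pair2_of_lt a b : (a < b)%N -> sval (pair2_of a b) = (a, b).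
Proof.
move=> ab; rewrite /= (minn_idPl (ltnW ab)) (maxn_idPr (ltnW ab)).
by rewrite (ltn_eqF ab) addn0.
Qed.

Lemma pmin_pmaxK s : pair2_of (pmin s) (pmax s) = s.
Proof.
by case: s => -[a b] ab; apply: pair2_eq; exact: pair2_of_lt.
Qed.

Lemma sq2_pair2_of (D : set nat) a b :
  a <> b -> D a -> D b -> sq2 D (pair2_of a b).
Proof.
move=> ab Da Db; rewrite /sq2 /= pmin_pair2_of pmax_pair2_of //.
by rewrite /minn /maxn; case: ifP.
Qed.

Lemma finite_pairs_below B : finite_set [set s : pair2 | (pmax s < B)%N].
Proof.
apply: (sub_finite_set (B := (fun p => pair2_of p.1 p.2) @` (`I_B `*` `I_B))).
  move=> s /= sB; exists (pmin s, pmax s); last exact: pmin_pmaxK.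
  by split => //=; have := pmin_lt_pmax s; lia.
by apply/finite_image/finite_setX; exact: finite_II.
Qed.

Lemma nonramseyP (E : set pair2) :
  ~ ramsey_ideal E -> exists D, infinite_set D /\ sq2 D `<=` E.
Proof. by move=> nE; apply: contrapT => noD; apply: nE => D iD DE; apply: noD; exists D. Qed.

Lemma Lambda_R_sub_Lambda_r (X : topologicalType) (y : pair2 -> X) :
  Lambda_R y `<=` Lambda_r y.
Proof.
move=> eta [E [/nonramseyP [D [iD DE]] yE]]; exists D; split => // U etaU.
pose F := [set s | E s /\ ~ U (y s)].
exists (pmin @` F `|` pmax @` F); split.
  by rewrite finite_setU; split; apply: finite_image; exact: yE.
move=> s [[Ds notK] [Ds' _]]; apply: contrapT => Uys; apply: notK; left.
by exists s => //; split => //; exact: DE.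
Qed.

Lemma size_le_code (s : seq nat) : (size s <= CodeSeq.code s)%N.
Proof.
elim: s => //= n s IH.
apply: leq_trans (leq_pmull _ (expn_gt0 2 n)); rewrite ltnS -addnn.
exact: leq_trans IH (leq_addr _ _).
Qed.

Lemma decode_inj : injective CodeSeq.decode.
Proof. exact: can_inj CodeSeq.decodeK. Qed.

Lemma prefix_size_eq (s t : seq nat) : prefix s t -> (size t <= size s)%N -> s = t.
Proof.
move=> /prefixP [u ->]; rewrite size_cat -[leqRHS]addn0 leq_add2l leqn0 size_eq0.
by move=> /eqP ->; rewrite cats0.
Qed.

Lemma nth_prefix (s t : seq nat) i :
  prefix s t -> (i < size s)%N -> nth 0%N s i = nth 0%N t i.
Proof. by move=> /prefixP [u ->] si; rewrite nth_cat si. Qed.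

(** * Analytic sets are limit sets *)

Section ImageAsLimitSet.
Variables (X Y : topologicalType) (dX : X -> X -> R) (rho : Y -> Y -> R).
Hypotheses (hX : metric_compatible dX) (hY : metric_compatible rho).
Hypothesis cY : metric_complete rho.
Variables (f : Y -> X) (e : nat -> Y) (z0 : Y).
Hypothesis fc : continuous f.
Hypothesis e_dense : forall z r, 0 < r -> exists n, rho z (e n) < r.

Definition fast_chain (t : seq nat) : Prop :=
  forall i j, (i < j)%N -> (j < size t)%N ->
  rho (e (nth 0%N t i)) (e (nth 0%N t j)) <= eps i.

Definition extends (n m : nat) : Prop :=
  prefix (CodeSeq.decode n) (CodeSeq.decode m) /\ fast_chain (CodeSeq.decode m).

Definition chain_point (t : seq nat) : X := f (e (last 0%N t)).

Definition image_seq (s : pair2) : X :=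
  if pselect (extends (pmin s) (pmax s)) then chain_point (CodeSeq.decode (pmax s))
  else if pselect (extends (pmax s) (pmin s)) then chain_point (CodeSeq.decode (pmin s))
  else f z0.

Lemma extends_asym n m : n <> m -> extends n m -> ~ extends m n.
Proof.
move=> nm [nm_pre _] [mn_pre _]; apply: nm; apply: decode_inj.
exact: prefix_size_eq nm_pre (size_prefix mn_pre).
Qed.

Lemma image_seq_extends n m : n <> m -> extends n m ->
  image_seq (pair2_of n m) = chain_point (CodeSeq.decode m).
Proof.
move=> nm ext; have := extends_asym nm ext.
rewrite /image_seq pmin_pair2_of pmax_pair2_of //.
by case: (ltngtP n m) => // _; do 2?case: pselect.
Qed.

Lemma image_seq_base n m : n <> m -> image_seq (pair2_of n m) <> f z0 ->
  extends n m \/ extends m n.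
Proof.
move=> nm; rewrite /image_seq pmin_pair2_of pmax_pair2_of //.
by case: (ltngtP n m) => // _; do 2?case: pselect => ?; auto.
Qed.

Section Approximations.
Variables (z : Y) (a : nat -> nat).
Hypothesis za : forall i, rho z (e (a i)) < eps i / 2.

Definition approx_code (l : nat) : nat := CodeSeq.code (mkseq a l.+1).

Lemma decode_approx_code l : CodeSeq.decode (approx_code l) = mkseq a l.+1.
Proof. exact: CodeSeq.codeK. Qed.

Lemma approx_code_inj : injective approx_code.
Proof.
move=> l l' eq_code; have := congr1 (size \o CodeSeq.decode) eq_code.
by rewrite /= !decode_approx_code !size_mkseq => -[].
Qed.

Lemma approx_code_ge l : (l <= approx_code l)%N.
Proof. by apply: leq_trans (size_le_code _); rewrite size_mkseq. Qed.

Lemma approx_code_extends l l' :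
  (l <= l')%N -> extends (approx_code l) (approx_code l').
Proof.
move=> ll'; rewrite /extends !decode_approx_code; split.
  rewrite prefixE size_mkseq; apply/eqP/(@eq_from_nth _ 0%N) => [|i].
    by rewrite size_takel // size_mkseq.
  rewrite size_takel ?size_mkseq // => il.
  by rewrite nth_take // !nth_mkseq //; lia.
move=> i j ij; rewrite size_mkseq => jl'; rewrite !nth_mkseq //; last lia.
have := metric_triangle_le hY (e (a i)) z (e (a j)); rewrite (metricC hY _ z).
by have := za i; have := za j; have := eps_le (ltnW ij); lra.
Qed.

Lemma image_seq_approx l l' : l <> l' ->
  image_seq (pair2_of (approx_code l) (approx_code l')) = f (e (a (maxn l l'))).
Proof.
move=> ll'; wlog lt : l l' ll' / (l < l')%N.
  move=> gen; case: (boolP (l < l')%N) => [lt|ge]; first exact: gen.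
  by rewrite pair2_ofC maxnC; apply: gen; [exact: nesym | lia].
rewrite image_seq_extends; last exact/approx_code_extends/ltnW.
  rewrite /chain_point decode_approx_code (maxn_idPr (ltnW lt)).
  by rewrite -nth_last size_mkseq nth_mkseq.
by move/approx_code_inj.
Qed.

Lemma image_point_R_limit : R_limit image_seq (f z).
Proof.
exists (sq2 (range approx_code)); split.
  move=> ideal; apply: (ideal (range approx_code)) => //.
  apply: unbounded_infinite_set => M; exists (approx_code M).
  by split; [exists M | exact: approx_code_ge].
move=> U /(nbhs_metric_ballP hX) [r r0 rU].
have [de de0 hde] := continuous_metric hY hX fc z r0.
have [L hL] := exists_eps_lt de0.
have [B hB] := finite_set_bounded (finite_image approx_code (finite_II L)).
apply: (sub_finite_set _ (finite_pairs_below B)).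
move=> s /= [[[l _ lE] [l' _ l'E]] notU].
have ll' : l <> l'.
  by move=> eq; have := pmin_lt_pmax s; rewrite -lE -l'E eq ltnn.
suff lt : (maxn l l' < L)%N.
  by rewrite -l'E; apply: hB; exists l' => //=; exact: leq_ltn_trans (leq_maxr l l') lt.
rewrite ltnNge; apply/negP => Lmax; apply: notU.
rewrite -(pmin_pmaxK s) -lE -l'E image_seq_approx //; apply: rU; apply: hde => /=.
by have := za (maxn l l'); have := eps_le Lmax; have := eps_gt0 (maxn l l'); lra.
Qed.

End Approximations.

Lemma image_sub_Lambda_R : f @` setT `<=` Lambda_R image_seq.
Proof.
move=> _ [z _ <-].
have /choice [a za] : forall i, exists n, rho z (e n) < eps i / 2.
  by move=> i; apply/e_dense/eps_half_gt0.
exact: image_point_R_limit za.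
Qed.

Definition linked (S : set nat) : Prop :=
  forall n m, S n -> S m -> n <> m -> extends n m \/ extends m n.

Lemma linked_unbounded S : linked S -> infinite_set S ->
  forall L, exists n, S n /\ (L <= size (CodeSeq.decode n))%N.
Proof.
move=> lS iS L; apply: contrapT => short; apply: iS.
pose sz n := if pselect (S n) then size (CodeSeq.decode n) else L.
have -> : S = sz @^-1` `I_L.
  apply/seteqP; split => n; rewrite /sz /=; case: pselect => [Sn|nSn].
  - by move=> _; rewrite ltnNge; apply/negP => Ln; apply: short; exists n.
  - by move=> /nSn.
  - by [].
  - by rewrite ltnn.
apply: finite_preimage (finite_II L) => n m; rewrite !in_setE /sz /=.
case: pselect => [Sn|nSn]; last by rewrite ltnn.
case: pselect => [Sm|nSm]; last by rewrite ltnn.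
move=> _ _ /= eq_size; apply: contrapT => nm.
have [[pre _]|[pre _]] := lS n m Sn Sm nm; apply: nm; apply: decode_inj.
  by apply: prefix_size_eq pre _; rewrite eq_size.
by apply/esym/(prefix_size_eq pre); rewrite eq_size.
Qed.

Lemma linked_long_extension S : linked S -> infinite_set S -> forall L,
  exists n m, [/\ S n, S m, n <> m, extends n m & (L < size (CodeSeq.decode m))%N].
Proof.
move=> lS iS L; have [n [Sn Ln]] := linked_unbounded lS iS L.
have [m [Sm nm]] := linked_unbounded lS iS (size (CodeSeq.decode n)).+1.
have n_neq_m : n <> m by move=> eq; rewrite eq ltnn in nm.
exists n, m; split => //; last exact: leq_ltn_trans Ln nm.
have [//|[pre _]] := lS n m Sn Sm n_neq_m.
by have := size_prefix pre; rewrite leqNgt nm.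
Qed.

Lemma linked_fast_chain S : linked S -> infinite_set S ->
  exists a : nat -> nat,
    (forall n i, S n -> (i < size (CodeSeq.decode n))%N ->
       nth 0%N (CodeSeq.decode n) i = a i) /\
    (forall i j, (i < j)%N -> rho (e (a i)) (e (a j)) <= eps i).
Proof.
move=> lS iS.
have /choice [m mP] : forall i, exists m,
    [/\ S m, (i < size (CodeSeq.decode m))%N & fast_chain (CodeSeq.decode m)].
  move=> i; have [_ [m [_ Sm _ [_ fast] im]]] := linked_long_extension lS iS i.
  by exists m.
pose a i := nth 0%N (CodeSeq.decode (m i)) i.
have a_nth n i : S n -> (i < size (CodeSeq.decode n))%N ->
    nth 0%N (CodeSeq.decode n) i = a i.
  move=> Sn isz; have [Smi imi _] := mP i.
  have [->//|nmi] := pselect (n = m i).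
  have [[pre _]|[pre _]] := lS n (m i) Sn Smi nmi; first exact: nth_prefix pre isz.
  exact: esym (nth_prefix pre imi).
exists a; split => // i j ij; have [Smj jmj fast] := mP j.
rewrite -(a_nth _ _ Smj jmj) -(a_nth _ _ Smj (ltn_trans ij jmj)).
exact: fast ij jmj.
Qed.

Lemma Lambda_r_sub_image : Lambda_r image_seq `<=` f @` setT.
Proof.
move=> eta [D [iD yD]].
have [->|neq] := pselect (eta = f z0); first by exists z0.
have [K [fK yK]] := yD _ (nbhs_metric_ball hX eta (metric_gt0 hX neq)).
have linkedDK : linked (D `\` K).
  move=> n m Sn Sm nm; apply: image_seq_base => // y_base.
  by have := yK _ (sq2_pair2_of nm Sn Sm); rewrite /= y_base; lra.
have iDK := infinite_setD iD fK.
have [a [a_nth a_fast]] := linked_fast_chain linkedDK iDK.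
have [z za] := fast_cauchy_limit hY cY (u := fun i => e (a i)) a_fast.
exists z => //; apply: (metric_eq_small hX) => r r0.
have r2 : 0 < r / 2 by lra.
have [K1 [fK1 yK1]] := yD _ (nbhs_metric_ball hX eta r2).
have [de de0 hde] := continuous_metric hY hX fc z r2.
have [L hL] := exists_eps_lt de0.
have linkedDKK1 : linked (D `\` K `\` K1).
  by move=> n m [Sn _] [Sm _]; exact: linkedDK.
have [n [m [[DKn nK1] [DKm mK1] nm ext Lm]]] :=
  linked_long_extension linkedDKK1 (infinite_setD iDK fK1) L.
set k := (size (CodeSeq.decode m)).-1.
have y_nm : image_seq (pair2_of n m) = f (e (a k)).
  by rewrite image_seq_extends // /chain_point -nth_last a_nth //; lia.
have := yK1 _ (sq2_pair2_of nm (conj DKn.1 nK1) (conj DKm.1 mK1)); rewrite /=.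
have : dX (f z) (image_seq (pair2_of n m)) < r / 2.
  rewrite y_nm; apply: hde; rewrite metricC //.
  have Lk : (L <= k)%N by rewrite /k; lia.
  by have := za k; have := eps_le Lk; lra.
have := metric_triangle_le hX (f z) (image_seq (pair2_of n m)) eta.
by rewrite (metricC hX (image_seq _) eta); lra.
Qed.

Lemma image_limit_sets :
  f @` setT = Lambda_r image_seq /\ f @` setT = Lambda_R image_seq.
Proof.
have rR := @Lambda_R_sub_Lambda_r _ image_seq.
split; apply/seteqP; split.
- by move=> x /image_sub_Lambda_R /rR.
- exact: Lambda_r_sub_image.
- exact: image_sub_Lambda_R.
- by move=> x /rR /Lambda_r_sub_image.
Qed.

End ImageAsLimitSet.

Lemma separable_dense_seq (Y : topologicalType) (rho : Y -> Y -> R) :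
  metric_compatible rho -> separable_space Y -> Y ->
  exists e : nat -> Y, forall z r, 0 < r -> exists n, rho z (e n) < r.
Proof.
move=> hY [Ds [cDs clDs]] z0; have /countable_injP [code code_inj] := cDs.
pose e n := if pselect (exists x, Ds x /\ code x = n) is left H
  then projT1 (cid H) else z0.
exists e => z r r0; have : closure Ds z by rewrite clDs.
move=> /(_ _ (nbhs_metric_ball hY z r0)) [x [Dx zx]]; exists (code x).
rewrite /e; case: pselect => [H|[]]; last by exists x.
case: (cid H) => x' [Dx' codex'] /=.
by rewrite (code_inj x' x) ?inE //; exact: mem_set.
Qed.

Lemma limit_sets_of_analytic (X : topologicalType) (dX : X -> X -> R) :
  metric_compatible dX -> forall C : set X, analytic C -> C !=set0 ->
  exists y, C = Lambda_r y /\ C = Lambda_R y.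
Proof.
move=> hX C [Y [[sepY [rho [hY cY]]] [f [fc <-]]]] [_ [z0 _ _]].
have [e e_dense] := separable_dense_seq hY sepY z0.
by eexists; exact: (image_limit_sets hX hY cY z0 fc e_dense).
Qed.

(** * Limit sets are analytic *)

Section BaireDistance.
Variable T : eqType.

Definition baire_dist (g h : nat -> T) : R :=
  if pselect (exists i, g i != h i) is left H then eps (ex_minn H) else 0.

Lemma baire_distP g h : (g = h /\ baire_dist g h = 0) \/
  exists n, [/\ g n <> h n, forall i, (i < n)%N -> g i = h i & baire_dist g h = eps n].
Proof.
rewrite /baire_dist; case: pselect => [H|H].
  case: ex_minnP => n /eqP gn minn; right; exists n; split => // i lt.
  by apply: contrapT => /eqP /minn; rewrite leqNgt lt.
left; split => //; apply: funext => i; apply: contrapT => /eqP gi.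
by apply: H; exists i.
Qed.

Lemma baire_dist_ge0 g h : 0 <= baire_dist g h.
Proof. by case: (baire_distP g h) => [[_ ->]|[n [_ _ ->]]]; [lra | exact/Rlt_le/eps_gt0]. Qed.

Lemma baire_dist_le g h n :
  (forall i, (i < n)%N -> g i = h i) -> baire_dist g h <= eps n.
Proof.
move=> gh; case: (baire_distP g h) => [[_ ->]|[m [gm _ ->]]]; first exact/Rlt_le/eps_gt0.
by apply: eps_le; rewrite leqNgt; apply/negP => /gh.
Qed.

Lemma baire_dist_ge g h m : g m <> h m -> eps m <= baire_dist g h.
Proof.
move=> gm; case: (baire_distP g h) => [[gh _]|[n [_ gh ->]]]; first by rewrite gh in gm.
by apply: eps_le; rewrite leqNgt; apply/negP => /gh.
Qed.

Lemma baire_dist_lt_agree g h n :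
  baire_dist g h < eps n -> forall i, (i <= n)%N -> g i = h i.
Proof.
move=> gh i ni; apply: contrapT => /baire_dist_ge.
by have := eps_le ni; lra.
Qed.

Lemma baire_dist_eq0 g h : baire_dist g h = 0 <-> g = h.
Proof.
split => [|<-]; last by case: (baire_distP g g) => [[]|[n []]].
by case: (baire_distP g h) => [[]|[n [_ _ ->]]] // eps0; have := eps_gt0 n; lra.
Qed.

Lemma baire_distC g h : baire_dist g h = baire_dist h g.
Proof.
case: (baire_distP g h) => [[-> ->]//|[n [gn gh ->]]].
case: (baire_distP h g) => [[hg _]|[m [hm hg ->]]]; first by rewrite hg in gn.
suff -> : n = m by [].
apply/eqP; rewrite eqn_leq; apply/andP; split; rewrite leqNgt; apply/negP.
  by move=> /gh /esym /hm.
by move=> /hg /esym /gn.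
Qed.

Lemma baire_dist_triangle g h k : baire_dist g k <= baire_dist g h + baire_dist h k.
Proof.
have := baire_dist_ge0 g h; have := baire_dist_ge0 h k.
case: (baire_distP g k) => [[_ ->]|[n [gk _ ->]]]; first lra.
have [gh|/baire_dist_ge] := pselect (g n = h n); last lra.
by rewrite gh in gk; have := baire_dist_ge gk; lra.
Qed.

End BaireDistance.

Section BaireSubspace.
Variables (T : countType) (P : (nat -> T) -> Prop).
Hypothesis P_closed :
  forall g, (forall m, exists h, P h /\ forall i, (i < m)%N -> g i = h i) -> P g.

Definition baire_sub := {g : nat -> T | P g}.
Definition baire_sub_dist (w w' : baire_sub) : R := baire_dist (sval w) (sval w').
Definition baire_space := metric_topology baire_sub_dist.

Lemma baire_space_compatible :
  metric_compatible (baire_sub_dist : baire_space -> baire_space -> R).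
Proof.
apply: metric_topology_compatible.
- by move=> ? ?; exact: baire_dist_ge0.
- move=> w w'; rewrite /baire_sub_dist baire_dist_eq0; split => [|-> //].
  by move=> eq; apply: eq_sig_hprop => // g p q; exact: Prop_irrelevance.
- by move=> ? ?; exact: baire_distC.
- by move=> ? ? ?; exact: baire_dist_triangle.
Qed.

Lemma baire_space_complete :
  metric_complete (baire_sub_dist : baire_space -> baire_space -> R).
Proof.
move=> u cu.
have /choice [N uN] : forall i, exists N, forall n m, (N <= n)%N -> (N <= m)%N ->
    baire_sub_dist (u n) (u m) < eps i.
  by move=> i; apply: cu; exact: eps_gt0.
pose g i := sval (u (N i)) i.
have ug m : exists n0, forall n, (n0 <= n)%N -> forall i, (i < m)%N -> sval (u n) i = g i.
  have [B NB] := finite_set_bounded (finite_image N (finite_II m)).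
  exists B => n Bn i im; symmetry.
  apply: (baire_dist_lt_agree (uN i _ _ (leqnn _) _)) => //.
  by apply: ltnW (leq_trans (NB _ _) Bn); exists i.
have Pg : P g.
  apply: P_closed => m; have [n0 hn0] := ug m; exists (sval (u n0)).
  by split; [exact: svalP | move=> i im; rewrite hn0].
exists (exist _ g Pg : baire_space) => U.
move=> /(nbhs_metric_ballP baire_space_compatible) [r r0 rU].
have [k hk] := exists_eps_lt r0; have [n0 hn0] := ug k.
exists n0 => // n n0n; apply: rU => /=.
rewrite /baire_sub_dist /= baire_distC; apply: Rle_lt_trans hk.
by apply: baire_dist_le => i ik; exact: hn0.
Qed.

Lemma baire_space_separable : separable_space baire_space.
Proof.
have [[w0 _]|empty] := pselect (exists w : baire_sub, True); last first.
  exists set0; split; first exact: countable0.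
  by rewrite closure0; apply/seteqP; split => // w _; apply: empty; exists w.
pose x0 := sval w0 0%N.
pose agrees (s : seq T) (w : baire_sub) :=
  forall i, (i < size s)%N -> sval w i = nth x0 s i.
pose pick s : baire_space :=
  if pselect (exists w, agrees s w) is left H then projT1 (cid H) else w0.
exists (range pick); split.
  exact: sub_countable (card_image_le pick setT) (countableP _).
apply/seteqP; split => // w _ U.
move=> /(nbhs_metric_ballP baire_space_compatible) [r r0 rU].
have [k hk] := exists_eps_lt r0; set s := mkseq (sval w) k.
have ws : agrees s w by move=> i; rewrite size_mkseq => ik; rewrite nth_mkseq.
exists (pick s); split; first by exists s.
apply: rU; rewrite /pick; case: pselect => [H|/(_ (ex_intro _ w ws)) //].
case: (cid H) => w' /= w's; apply: Rle_lt_trans hk; apply: baire_dist_le => i ik.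
by rewrite w's ?size_mkseq // nth_mkseq.
Qed.

Lemma polish_baire_space : polish baire_space.
Proof.
split; first exact: baire_space_separable.
by exists baire_sub_dist; split; [exact: baire_space_compatible | exact: baire_space_complete].
Qed.

End BaireSubspace.

Section LimitSetAnalytic.
Variables (X : topologicalType) (dX : X -> X -> R).
Hypotheses (hX : metric_compatible dX) (cX : metric_complete dX).
Variables (y : pair2 -> X) (by_min : bool).

(* A witness packs [g i = (d i, N i)]; [by_min] selects r-limits, where the
   smaller index of a pair must pass the threshold, or R-limits, where the
   larger one must. *)
Definition elem (g : nat -> nat * nat) i := (g i).1.
Definition threshold (g : nat -> nat * nat) k := (g k).2.

Definition at_indices (g : nat -> nat * nat) (s : pair2) i j :=
  pmin s = elem g i /\ pmax s = elem g j.

Definition past (g : nat -> nat * nat) k i j : bool :=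
  (threshold g k <= if by_min then i else j)%N.

Definition limit_witness (g : nat -> nat * nat) : Prop :=
  [/\ forall i, (elem g i < elem g i.+1)%N,
      forall k, (threshold g k <= threshold g k.+1)%N &
      forall k s t i j i' j', at_indices g s i j -> at_indices g t i' j' ->
        past g k i j -> past g k i' j' -> dX (y s) (y t) < eps k].

Lemma limit_witness_closed g :
  (forall m, exists h, limit_witness h /\ forall i, (i < m)%N -> g i = h i) ->
  limit_witness g.
Proof.
move=> approx; split.
- move=> i; have [h [[h_inc _ _] gh]] := approx i.+2.
  by rewrite /elem !gh //; exact: h_inc.
- move=> k; have [h [[_ h_mono _] gh]] := approx k.+2.
  by rewrite /threshold !gh //; exact: h_mono.
- move=> k s t i j i' j'.
  have [h [[_ _ h_osc] gh]] := approx (k + i + j + i' + j').+1.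
  rewrite /at_indices /past /elem /threshold !gh; try lia.
  exact: h_osc.
Qed.

Local Notation witness := (baire_sub limit_witness).

Lemma witness_elem_inc (w : witness) i : (elem (sval w) i < elem (sval w) i.+1)%N.
Proof. by case: (svalP w). Qed.

Lemma witness_threshold_mono (w : witness) k :
  (threshold (sval w) k <= threshold (sval w) k.+1)%N.
Proof. by case: (svalP w). Qed.

Lemma witness_osc (w : witness) k s t i j i' j' :
  at_indices (sval w) s i j -> at_indices (sval w) t i' j' ->
  past (sval w) k i j -> past (sval w) k i' j' -> dX (y s) (y t) < eps k.
Proof. by case: (svalP w) => _ _; apply. Qed.

Definition approx_pair (w : witness) k : pair2 :=
  pair2_of (elem (sval w) (threshold (sval w) k))
           (elem (sval w) (threshold (sval w) k).+1).

Lemma approx_pair_indices (w : witness) k :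
  at_indices (sval w) (approx_pair w k)
    (threshold (sval w) k) (threshold (sval w) k).+1.
Proof.
have lt := witness_elem_inc w (threshold (sval w) k).
by rewrite /at_indices /approx_pair /pmin /pmax pair2_of_lt.
Qed.

Lemma past_approx (w : witness) k m : (k <= m)%N ->
  past (sval w) k (threshold (sval w) m) (threshold (sval w) m).+1.
Proof.
move=> km; have := homo_leq leqnn leq_trans (witness_threshold_mono w) km.
by rewrite /past; case: by_min => // Nkm; exact: leq_trans Nkm (leqnSn _).
Qed.

Lemma approx_cauchy (w : witness) k m : (k <= m)%N ->
  dX (y (approx_pair w k)) (y (approx_pair w m)) < eps k.
Proof.
move=> km; apply: witness_osc (approx_pair_indices w k) (approx_pair_indices w m) _ _.
  exact: past_approx.
exact: past_approx.
Qed.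

Lemma witness_limit_ex (w : witness) :
  exists x, forall k, dX (y (approx_pair w k)) x <= eps k.
Proof.
apply: fast_cauchy_limit hX cX _ _ => k m km.
exact/Rlt_le/approx_cauchy/ltnW.
Qed.

Definition witness_limit (w : baire_space limit_witness) : X :=
  projT1 (cid (witness_limit_ex w)).

Lemma witness_limit_approx (w : witness) k :
  dX (y (approx_pair w k)) (witness_limit w) <= eps k.
Proof. by rewrite /witness_limit; case: cid. Qed.

Lemma witness_limit_close (w : witness) k s i j :
  at_indices (sval w) s i j -> past (sval w) k i j ->
  dX (y s) (witness_limit w) <= eps k.
Proof.
move=> sij pk; apply: Rnot_lt_le => far.
have gap : 0 < dX (y s) (witness_limit w) - eps k by lra.
have [m hm] := exists_eps_lt gap.
have := witness_osc sij (approx_pair_indices w (maxn k m)) pk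
  (past_approx w (leq_maxl k m)).
have := witness_limit_approx w (maxn k m); have := eps_le (leq_maxr k m).
have := metric_triangle_le hX (y s) (y (approx_pair w (maxn k m))) (witness_limit w).
lra.
Qed.

Lemma continuous_witness_limit : continuous witness_limit.
Proof.
apply/continuousP => A oA; rewrite metric_topologyE => w /= Aw.
have [r [r0 rA]] := (metric_openP hX A).1 oA _ Aw.
have r2 : 0 < r / 2 by lra.
have [k hk] := exists_eps_lt r2.
set N := threshold (sval w) k.
exists (eps (maxn k N.+1).+1); split; first exact: eps_gt0.
move=> w' /= /baire_dist_lt_agree agree; apply: rA => /=.
have same_approx : approx_pair w k = approx_pair w' k.
  have eN : N = threshold (sval w') k by rewrite /N /threshold agree //; lia.
  by rewrite /approx_pair /elem -eN -/N !agree //; lia.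
have := witness_limit_approx w k; have := witness_limit_approx w' k.
rewrite -same_approx.
have := metric_triangle_le hX (witness_limit w) (y (approx_pair w k)) (witness_limit w').
by rewrite (metricC hX (witness_limit w) (y _)); lra.
Qed.

Lemma infinite_range_elem (w : witness) : infinite_set (range (elem (sval w))).
Proof.
apply: unbounded_infinite_set => M; exists (elem (sval w) M).
by split; [exists M | exact: increasing_ge_id (witness_elem_inc w) M].
Qed.

Lemma witness_limit_sub_Lambda_r : by_min -> witness_limit @` setT `<=` Lambda_r y.
Proof.
move=> by_minT _ [w _ <-]; exists (range (elem (sval w))).
split; first exact: infinite_range_elem.
move=> U /(nbhs_metric_ballP hX) [r r0 rU]; have [k hk] := exists_eps_lt r0.
exists (elem (sval w) @` `I_(threshold (sval w) k)); split.
  exact/finite_image/finite_II.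
move=> s [[[i _ iE] notKi] [[j _ jE] _]].
apply: rU => /=; rewrite metricC //; apply: Rle_lt_trans hk.
apply: (witness_limit_close (i := i) (j := j)); first by rewrite /at_indices iE jE.
by rewrite /past by_minT leqNgt; apply/negP => small; apply: notKi; exists i.
Qed.

Lemma witness_limit_sub_Lambda_R : ~~ by_min -> witness_limit @` setT `<=` Lambda_R y.
Proof.
move=> by_minF _ [w _ <-]; exists (sq2 (range (elem (sval w)))); split.
  move=> ideal; apply: (ideal (range (elem (sval w)))) => //.
  exact: infinite_range_elem.
move=> U /(nbhs_metric_ballP hX) [r r0 rU]; have [k hk] := exists_eps_lt r0.
apply: (sub_finite_set _ (finite_pairs_below (elem (sval w) (threshold (sval w) k)))).
move=> s /= [[[i _ iE] [j _ jE]] notU].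
rewrite -jE; apply: (homo_ltn ltn_trans (witness_elem_inc w)).
rewrite ltnNge; apply/negP => kj; apply: notU; apply: rU => /=.
rewrite metricC //; apply: Rle_lt_trans hk.
apply: (witness_limit_close (i := i) (j := j)); first by rewrite /at_indices iE jE.
by rewrite /past (negbTE by_minF).
Qed.

Lemma witness_of_limit eta (D : set nat) (B : nat -> nat) : infinite_set D ->
  (forall k (s : pair2), D (pmin s) -> D (pmax s) ->
     (B k <= if by_min then pmin s else pmax s)%N -> dX eta (y s) < eps k / 2) ->
  (witness_limit @` setT) eta.
Proof.
move=> iD close.
have /choice [next nextP] : forall n, exists m, D m /\ (n < m)%N.
  by move=> n; apply: infinite_set_unbounded.
pose d i := iter i.+1 next 0%N.
pose thr k := sumn (mkseq B k.+1).
pose g i := (d i, thr i).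
have d_inc i : (d i < d i.+1)%N := (nextP _).2.
have B_thr k : (B k <= thr k)%N by rewrite /thr mkseqS sumn_rcons leq_addl.
have near k s i j : at_indices g s i j -> past g k i j -> dX eta (y s) < eps k / 2.
  move=> [si sj] pk; apply: close; rewrite ?si ?sj; try exact: (nextP _).1.
  apply: leq_trans (B_thr k) _; move: pk; rewrite /past.
  by case: by_min => pk; exact: leq_trans pk (increasing_ge_id d_inc _).
have wg : limit_witness g.
  split=> [i|k|k s t i j i' j' sij ti'j' ps pt]; first exact: d_inc.
    by change (thr k <= thr k.+1)%N; rewrite /thr (mkseqS B k.+1) sumn_rcons leq_addr.
  have := near k s i j sij ps; have := near k t i' j' ti'j' pt.
  have := metric_triangle_le hX (y s) eta (y t); rewrite (metricC hX (y s) eta).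
  by have := eps_gt0 k; lra.
pose w : witness := exist _ g wg.
exists w => //; apply: esym; apply: (metric_eq_small hX) => r r0.
have r2 : 0 < r / 2 by lra.
have [k hk] := exists_eps_lt r2.
have := near k _ _ _ (approx_pair_indices w k) (past_approx w (leqnn k)).
have := witness_limit_approx w k; have := eps_gt0 k.
by have := metric_triangle_le hX eta (y (approx_pair w k)) (witness_limit w); lra.
Qed.

Lemma Lambda_r_sub_witness_limit : by_min -> Lambda_r y `<=` witness_limit @` setT.
Proof.
move=> by_minT eta [D [iD yD]].
have /choice [K KP] : forall k, exists K, finite_set K /\
    forall s, sq2 (D `\` K) s -> dX eta (y s) < eps k / 2.
  move=> k; have [K [fK yK]] := yD _ (nbhs_metric_ball hX eta (eps_half_gt0 k)).
  by exists K; split => // s /yK.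
have /choice [B BP] : forall k, exists b, forall n, K k n -> (n < b)%N.
  by move=> k; apply: finite_set_bounded; exact: (KP k).1.
apply: (witness_of_limit (B := B) iD) => k s Ds Ds'; rewrite by_minT => Bs.
have Bs' := leq_trans Bs (ltnW (pmin_lt_pmax s)).
by apply: (KP k).2; split; split => // /BP; rewrite ltnNge ?Bs ?Bs'.
Qed.

Lemma Lambda_R_sub_witness_limit : ~~ by_min -> Lambda_R y `<=` witness_limit @` setT.
Proof.
move=> by_minF eta [E [/nonramseyP [D [iD DE]] yE]].
have /choice [B BP] : forall k, exists b, forall s, E s ->
    ~ (dX eta (y s) < eps k / 2) -> (pmax s < b)%N.
  move=> k; have fE := yE _ (nbhs_metric_ball hX eta (eps_half_gt0 k)).
  have [b bP] := finite_set_bounded (finite_image pmax fE).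
  by exists b => s Es far; apply: bP; exists s.
apply: (witness_of_limit (B := B) iD) => k s Ds Ds'.
rewrite (negbTE by_minF) => Bs; apply: contrapT => far.
by have := BP k s (DE s (conj Ds Ds')) far; rewrite ltnNge Bs.
Qed.

Lemma analytic_witness_limit : analytic (witness_limit @` setT).
Proof.
exists (baire_space limit_witness); split.
  exact: polish_baire_space limit_witness_closed.
by exists witness_limit; split; first exact: continuous_witness_limit.
Qed.

End LimitSetAnalytic.

Lemma analytic_Lambda_r (X : topologicalType) (dX : X -> X -> R)
    (hX : metric_compatible dX) (cX : metric_complete dX) (y : pair2 -> X) :
  analytic (Lambda_r y).
Proof.
have -> : Lambda_r y = @witness_limit _ _ hX cX y true @` setT.
  apply/seteqP; split.
    exact: Lambda_r_sub_witness_limit.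
  exact: witness_limit_sub_Lambda_r.
exact: analytic_witness_limit.
Qed.

Lemma analytic_Lambda_R (X : topologicalType) (dX : X -> X -> R)
    (hX : metric_compatible dX) (cX : metric_complete dX) (y : pair2 -> X) :
  analytic (Lambda_R y).
Proof.
have -> : Lambda_R y = @witness_limit _ _ hX cX y false @` setT.
  apply/seteqP; split.
    exact: Lambda_R_sub_witness_limit.
  exact: witness_limit_sub_Lambda_R.
exact: analytic_witness_limit.
Qed.

Lemma analytic_set0 (X : topologicalType) : analytic (@set0 X).
Proof.
pose rho0 (x y : void) : R := 0.
exists (metric_topology rho0); split.
  split.
    exists set0; split; first exact: countable0.
    by rewrite closure0; apply/seteqP; split => // -[].
  exists rho0; split; last by move=> u; case: (u 0%N).
  by apply: metric_topology_compatible => -[].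
exists (fun x : metric_topology rho0 => match x with end); split; first by case.
by apply/seteqP; split => // x [[]].
Qed.

Lemma limit_family_Sigma11 (X : topologicalType) (Lambda : (pair2 -> X) -> set X) :
  (forall y, analytic (Lambda y)) ->
  (forall C, analytic C -> C !=set0 -> exists y, C = Lambda y) ->
  [set A | (exists y, A = Lambda y) \/ A = set0] = @Sigma11 X.
Proof.
move=> an onto; apply/seteqP; split => A.
  by move=> [[y ->]|->]; [exact: an | exact: analytic_set0].
move=> aA; have [->|nA] := pselect (A = set0); first by right.
by left; apply: onto => //; apply/set0P/eqP.
Qed.

Theorem theorem4p2 (X : topologicalType) :
  polish X -> ~ countable (@setT X) ->
  (@L_r X = @Sigma11 X /\ @L_R X = @Sigma11 X) /\
  (forall C : set X, analytic C -> C !=set0 ->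
     exists y : pair2 -> X, C = Lambda_r y /\ C = Lambda_R y).
Proof.
move=> [_ [d [hX cX]]] _; have onto := limit_sets_of_analytic hX.
split; last exact: onto.
split; apply: limit_family_Sigma11.
- exact: analytic_Lambda_r hX cX.
- by move=> C aC nC; have [y [-> _]] := onto C aC nC; exists y.
- exact: analytic_Lambda_R hX cX.
- by move=> C aC nC; have [y [_ ->]] := onto C aC nC; exists y.
Qed.
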